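(* Define $\alpha,\beta:[0,2\pi]\to\mathbb{R}^3$ and $\gamma:[0,\pi]\to\mathbb{R}^3$ by $\alpha(t)=(\cos t,\sin t,1)$, $\beta(t)=(\cos t,\sin t,-1)$, $\gamma(t)=\big(2\cos(2t)-1,\ 2\sin(2t),\ \tfrac98\cos t-\tfrac18\cos(3t)\big)$, and let $C=\operatorname{conv}\big(\alpha([0,2\pi])\cup\beta([0,2\pi])\cup\gamma([0,\pi])\big)$. Then the set of extreme points of $C$ is exactly $\alpha([0,2\pi])\cup\beta([0,2\pi])\cup\gamma([0,\pi])$, and every extreme point of $C$ is exposed.
   Context: An extreme point $p$ of $C$ is exposed if there is a supporting hyperplane $H$ of $C$ with $C\cap H=\{p\}$. *)

From Stdlib Require Import Reals.
Open Scope R_scope.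

Record R3 := mkR3 { px : R; py : R; pz : R }.

Definition r3add (u v : R3) : R3 := mkR3 (px u + px v) (py u + py v) (pz u + pz v).
Definition r3scale (t : R) (u : R3) : R3 := mkR3 (t * px u) (t * py u) (t * pz u).
Definition r3dot (u v : R3) : R := px u * px v + py u * py v + pz u * pz v.
Definition r3zero : R3 := mkR3 0 0 0.

Definition convex (K : R3 -> Prop) : Prop :=
  forall x y t, K x -> K y -> 0 <= t <= 1 ->
    K (r3add (r3scale t x) (r3scale (1 - t) y)).

Definition conv (S : R3 -> Prop) (p : R3) : Prop :=
  forall K, convex K -> (forall x, S x -> K x) -> K p.

Definition extreme_point (C : R3 -> Prop) (p : R3) : Prop :=
  C p /\ forall x y t, C x -> C y -> 0 < t < 1 ->
    p = r3add (r3scale t x) (r3scale (1 - t) y) -> x = p /\ y = p.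

Definition supporting_hyperplane (C : R3 -> Prop) (a : R3) (b : R) : Prop :=
  a <> r3zero /\ (forall x, C x -> r3dot a x <= b) /\
  (exists x, C x /\ r3dot a x = b).

Definition exposed_point (C : R3 -> Prop) (p : R3) : Prop :=
  extreme_point C p /\
  exists a b, supporting_hyperplane C a b /\
    forall x, (C x /\ r3dot a x = b) <-> x = p.

Definition alpha (t : R) : R3 := mkR3 (cos t) (sin t) 1.
Definition beta (t : R) : R3 := mkR3 (cos t) (sin t) (-1).
Definition gamma (t : R) : R3 :=
  mkR3 (2 * cos (2 * t) - 1) (2 * sin (2 * t))
       (9 / 8 * cos t - 1 / 8 * cos (3 * t)).

Definition curves (p : R3) : Prop :=
  (exists t, 0 <= t <= 2 * PI /\ p = alpha t) \/
  (exists t, 0 <= t <= 2 * PI /\ p = beta t) \/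
  (exists t, 0 <= t <= PI /\ p = gamma t).

(** Every point of the three curves is exposed, in the set of curves itself, by an explicit
    linear functional, and a functional exposing a point of [S] also exposes it in [conv S];
    conversely an extreme point of [conv S] lies in [S].  Writing [c = cos t], [s = sin t],
    the curves are algebraic: [gamma] has horizontal part [(1 - 4 s^2, 4 c s)], on the circle
    of radius 2 through [(1,0)], and height [1 - (1-c)^2 (2+c)/2].  The half-turn about the
    x-axis preserves the curves and exchanges the two circles, so only the top circle and
    [gamma] need functionals.  The delicate points are those [(u, v, 1)] of the top circle
    near [gamma 0 = (1,0,1)]: they are exposed by [((1-u) u, (1-u) v, 3200)], because
    [gamma] overshoots the unit circle only to order [s^2] while dropping below height 1 to
    order [s^4]; with the weight [1 - u] on the horizontal part, the estimate
    [gamma_tilt_le] absorbs the first effect into the second. *)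

From Stdlib Require Import Reals Lra Psatz Classical.
Open Scope R_scope.

Notation comb t x y := (r3add (r3scale t x) (r3scale (1 - t) y)).

Lemma comb_diag t x : comb t x x = x.
Proof. destruct x; unfold r3add, r3scale; simpl; f_equal; ring. Qed.

Lemma comb_0 x y : comb 0 x y = y.
Proof. destruct y; unfold r3add, r3scale; simpl; f_equal; ring. Qed.

Lemma comb_1 x y : comb 1 x y = x.
Proof. destruct x; unfold r3add, r3scale; simpl; f_equal; ring. Qed.

Lemma r3dot_comb a t x y :
  r3dot a (comb t x y) = t * r3dot a x + (1 - t) * r3dot a y.
Proof. unfold r3dot, r3add, r3scale; simpl; ring. Qed.

Lemma convex_halfspace_meeting_at a b p :
  convex (fun x => r3dot a x <= b /\ (r3dot a x = b -> x = p)).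
Proof.
  intros x y t [Hx Ex] [Hy Ey] Ht. rewrite r3dot_comb. split; [nra|]. intro E.
  destruct (Req_dec t 0) as [->|t0]; [rewrite comb_0; apply Ey; lra|].
  destruct (Req_dec t 1) as [->|t1]; [rewrite comb_1; apply Ex; lra|].
  rewrite Ex, Ey by nra. apply comb_diag.
Qed.

Section ConvexHull.

Variable S : R3 -> Prop.

Lemma subset_conv x : S x -> conv S x.
Proof. intros Sx K _ HK. auto. Qed.

Lemma convex_conv : convex (conv S).
Proof. intros x y t Hx Hy Ht K HK HS. apply HK; [apply Hx | apply Hy | ]; auto. Qed.

(* If [p] is extreme, [conv S] minus [p] is still convex, so it contains [S] unless [S p]. *)
Lemma extreme_conv_mem p : extreme_point (conv S) p -> S p.
Proof.
  intros [Hp Hext]. apply NNPP. intro nSp.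
  enough (H : p <> p) by (apply H; reflexivity).
  apply (Hp (fun x => conv S x /\ x <> p)).
  - intros x y t [Hx nx] [Hy ny] Ht. split; [apply convex_conv; auto|]. intro E.
    destruct (Req_dec t 0) as [->|t0]; [rewrite comb_0 in E; auto|].
    destruct (Req_dec t 1) as [->|t1]; [rewrite comb_1 in E; auto|].
    apply nx, (Hext x y t Hx Hy ltac:(lra) (eq_sym E)).
  - intros x Sx. split; [apply subset_conv; auto|]. intros ->. auto.
Qed.

Definition exposes (a p : R3) : Prop :=
  a <> r3zero /\
  forall q, S q -> r3dot a q <= r3dot a p /\ (r3dot a q = r3dot a p -> q = p).

Lemma exposed_conv p a : S p -> exposes a p -> exposed_point (conv S) p.
Proof.
  intros Sp [Ha Hq]. set (b := r3dot a p).
  assert (Hface : forall x, conv S x -> r3dot a x <= b /\ (r3dot a x = b -> x = p)).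
  { intros x Hx. apply Hx; [apply convex_halfspace_meeting_at|]. intros q Sq. apply Hq, Sq. }
  assert (Cp : conv S p) by (apply subset_conv, Sp).
  split; [split; [exact Cp|] | exists a, b; split; [split; [exact Ha|split]|]].
  - intros x y t Hx Hy Ht E.
    destruct (Hface x Hx) as [Hxb Exb], (Hface y Hy) as [Hyb Eyb].
    assert (Hb : b = t * r3dot a x + (1 - t) * r3dot a y)
      by (unfold b; rewrite E at 1; apply r3dot_comb).
    split; [apply Exb | apply Eyb]; nra.
  - intros x Hx. apply Hface, Hx.
  - exists p. split; [exact Cp | reflexivity].
  - intros x. split; [intros [Hx E]; apply Hface; auto | intros ->; split; [exact Cp | reflexivity]].
Qed.

End ConvexHull.

Lemma exposes_subset (S T : R3 -> Prop) a p :
  (forall q, S q -> T q) -> exposes T a p -> exposes S a p.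
Proof. intros ST [Ha Hq]. split; [exact Ha|]. intros q Sq. apply Hq, ST, Sq. Qed.

Definition flip (p : R3) : R3 := mkR3 (px p) (- py p) (- pz p).

Lemma flip_involutive p : flip (flip p) = p.
Proof. destruct p; unfold flip; simpl; f_equal; ring. Qed.

Lemma r3dot_flip a q : r3dot (flip a) q = r3dot a (flip q).
Proof. unfold r3dot, flip; simpl; ring. Qed.

Lemma exposes_flip (S : R3 -> Prop) a p :
  (forall q, S q -> S (flip q)) -> exposes S a p -> exposes S (flip a) (flip p).
Proof.
  intros Sflip [Ha Hq]. split.
  - intro E. apply Ha. rewrite <- (flip_involutive a), E. unfold flip, r3zero; simpl; f_equal; ring.
  - intros q Sq. rewrite !r3dot_flip, flip_involutive.
    destruct (Hq (flip q) (Sflip q Sq)) as [Hle Heq]. split; [exact Hle|].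
    intro E. rewrite <- (flip_involutive q), (Heq E). reflexivity.
Qed.

Definition gamma_cs (c s : R) : R3 :=
  mkR3 (4 * (c * c) - 3) (4 * c * s) (3 / 2 * c - 1 / 2 * (c * c * c)).

Definition curves_alg (q : R3) : Prop :=
  (exists c s, c * c + s * s = 1 /\ q = mkR3 c s 1) \/
  (exists c s, c * c + s * s = 1 /\ q = mkR3 c s (-1)) \/
  (exists c s, c * c + s * s = 1 /\ 0 <= s /\ q = gamma_cs c s).

Lemma cos_sin_unit t : cos t * cos t + sin t * sin t = 1.
Proof. pose proof (sin2_cos2 t) as H. unfold Rsqr in H. lra. Qed.

Lemma gamma_cos_sin t : gamma t = gamma_cs (cos t) (sin t).
Proof.
  unfold gamma, gamma_cs. pose proof (cos_sin_unit t).
  replace (3 * t) with (2 * t + t) by ring.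
  rewrite cos_plus, !cos_2a_cos, sin_2a. f_equal; try ring.
  replace (2 * sin t * cos t * sin t) with (2 * cos t * (sin t * sin t)) by ring.
  replace (sin t * sin t) with (1 - cos t * cos t) by lra. field.
Qed.

Lemma curves_alg_of_curves q : curves q -> curves_alg q.
Proof.
  pose proof cos_sin_unit.
  intros [[t [_ ->]] | [[t [_ ->]] | [t [Ht ->]]]].
  - left. exists (cos t), (sin t). auto.
  - right; left. exists (cos t), (sin t). auto.
  - right; right. exists (cos t), (sin t).
    split; [auto | split; [apply sin_ge_0; lra | apply gamma_cos_sin]].
Qed.

Lemma curves_alg_flip q : curves_alg q -> curves_alg (flip q).
Proof.
  intros [[c [s [Hcs ->]]] | [[c [s [Hcs ->]]] | [c [s [Hcs [Hs ->]]]]]].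
  - right; left. exists c, (- s). split; [nra | unfold flip; simpl; f_equal; ring].
  - left. exists c, (- s). split; [nra | unfold flip; simpl; f_equal; ring].
  - right; right. exists (- c), s. split; [nra | split; [exact Hs|]].
    unfold flip, gamma_cs; simpl; f_equal; ring.
Qed.

Lemma unit_dot_le u v c s :
  u * u + v * v = 1 -> c * c + s * s = 1 -> u * c + v * s <= 1.
Proof. intros. pose proof (pow2_ge_0 (c - u)). pose proof (pow2_ge_0 (s - v)). nra. Qed.

Lemma unit_dot_eq u v c s :
  u * u + v * v = 1 -> c * c + s * s = 1 -> u * c + v * s = 1 -> c = u /\ s = v.
Proof.
  intros. assert (Hsq : (c - u) * (c - u) + (s - v) * (s - v) = 0) by nra.
  pose proof (pow2_ge_0 (c - u)). pose proof (pow2_ge_0 (s - v)).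
  split; nra.
Qed.

Lemma gamma_height_deficit c :
  1 - (3 / 2 * c - 1 / 2 * (c * c * c)) = (1 - c) * (1 - c) * (2 + c) / 2.
Proof. field. Qed.

Lemma sin4_le_gamma_height_deficit c s : c * c + s * s = 1 ->
  (s * s) * (s * s) <= 8 * (1 - (3 / 2 * c - 1 / 2 * (c * c * c))).
Proof.
  intros Hcs. rewrite gamma_height_deficit.
  replace (s * s) with ((1 - c) * (1 + c)) by nra.
  assert (-1 <= c <= 1) by (split; nra).
  assert (0 <= (1 - c) * (1 - c)) by nra.
  assert ((1 + c) * (1 + c) <= 4) by nra.
  nra.
Qed.

(* Uses [4 c^2 - 3 = 1 - 4 s^2], [v^2 <= 2 (1 - u)] and AM-GM twice. *)
Lemma gamma_tilt_le u v c s : u * u + v * v = 1 -> c * c + s * s = 1 ->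
  (1 - u) * (u * (4 * (c * c) - 3) + v * (4 * c * s) - 1)
  <= - ((1 - u) * (1 - u)) / 4 + 400 * ((s * s) * (s * s)).
Proof.
  intros Huv Hcs. set (m := 1 - u).
  assert (Hm : 0 <= m) by (unfold m; nra).
  assert (Hv2 : v * v <= 2 * m) by (unfold m; nra).
  assert (Hu : -1 <= u) by nra.
  assert (Hc : c * c <= 1) by nra.
  assert (Hs : 0 <= s * s) by nra.
  assert (E : m * (u * (4 * (c * c) - 3) + v * (4 * c * s) - 1)
              = - (m * m) - 4 * u * m * (s * s) + 4 * m * v * c * s)
    by (unfold m; nra).
  assert (h1 : 4 * m * v * c * s <= m * m / 2 + 8 * (v * v) * (c * c) * (s * s))
    by (pose proof (pow2_ge_0 (m - 4 * v * c * s)); nra).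
  assert (h2 : 8 * (v * v) * (c * c) * (s * s) <= 16 * m * (s * s)).
  { assert (v * v * (c * c) <= 2 * m) by nra. nra. }
  assert (h3 : - 4 * u * m * (s * s) <= 4 * m * (s * s)) by nra.
  assert (h4 : 20 * m * (s * s) <= m * m / 4 + 400 * ((s * s) * (s * s)))
    by (pose proof (pow2_ge_0 (m / 2 - 20 * (s * s))); nra).
  rewrite E. lra.
Qed.

Lemma exposes_top_circle u v : u * u + v * v = 1 -> u < 1 ->
  exposes curves_alg (mkR3 ((1 - u) * u) ((1 - u) * v) 3200) (mkR3 u v 1).
Proof.
  intros Huv Hu. split; [intro E; injection E; lra|].
  intros q [[c [s [Hcs ->]]] | [[c [s [Hcs ->]]] | [c [s [Hcs [_ ->]]]]]];
    unfold r3dot, gamma_cs; simpl.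
  - pose proof (unit_dot_le u v c s Huv Hcs). split; [nra|]. intro E.
    assert (Hdot : u * c + v * s = 1) by (apply (Rmult_eq_reg_l (1 - u)); nra).
    destruct (unit_dot_eq u v c s Huv Hcs Hdot) as [-> ->]. reflexivity.
  - pose proof (unit_dot_le u v c s Huv Hcs). split; [nra|]. intro; nra.
  - pose proof (gamma_tilt_le u v c s Huv Hcs).
    pose proof (sin4_le_gamma_height_deficit c s Hcs).
    assert (0 < (1 - u) * (1 - u)) by nra.
    split; [nra|]. intro; nra.
Qed.

Lemma exposes_top_corner : exposes curves_alg (mkR3 1 0 1) (mkR3 1 0 1).
Proof.
  split; [intro E; injection E; lra|].
  intros q [[c [s [Hcs ->]]] | [[c [s [Hcs ->]]] | [c [s [Hcs [_ ->]]]]]];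
    unfold r3dot, gamma_cs; simpl.
  - split; [nra|]. intro E. assert (c = 1) by lra. subst.
    assert (s = 0) by nra. subst. reflexivity.
  - split; [nra|]. intro; nra.
  - pose proof (sin4_le_gamma_height_deficit c s Hcs).
    assert (-1 <= c <= 1) by (split; nra).
    assert (0 <= (1 - c) * (1 - c) * (2 + c)) by nra.
    pose proof (gamma_height_deficit c).
    split; [nra|]. intro E.
    assert (s = 0) by nra. subst. assert (c = 1) by nra. subst.
    unfold gamma_cs. f_equal; field.
Qed.

Lemma exposes_gamma c0 s0 : c0 * c0 + s0 * s0 = 1 -> 0 < s0 ->
  exposes curves_alg (mkR3 (2 * c0 * c0 - 1) (2 * s0 * c0) 0) (gamma_cs c0 s0).
Proof.
  intros H0 Hs0. split; [intro E; injection E; intros; nra|].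
  assert (HU : (2 * c0 * c0 - 1) * (2 * c0 * c0 - 1) + (2 * s0 * c0) * (2 * s0 * c0) = 1)
    by nra.
  assert (Hp : r3dot (mkR3 (2 * c0 * c0 - 1) (2 * s0 * c0) 0) (gamma_cs c0 s0)
               = 3 - 2 * c0 * c0) by (unfold r3dot, gamma_cs; simpl; nra).
  rewrite Hp. assert (c0 * c0 < 1) by nra.
  intros q [[c [s [Hcs ->]]] | [[c [s [Hcs ->]]] | [c [s [Hcs [Hs ->]]]]]];
    unfold r3dot, gamma_cs; simpl.
  - pose proof (unit_dot_le _ _ c s HU Hcs). split; [lra|]. intro; lra.
  - pose proof (unit_dot_le _ _ c s HU Hcs). split; [lra|]. intro; lra.
  - assert (HC : (2 * c * c - 1) * (2 * c * c - 1) + (2 * c * s) * (2 * c * s) = 1) by nra.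
    pose proof (unit_dot_le _ _ _ _ HU HC).
    split; [nra|]. intro E.
    destruct (unit_dot_eq _ _ _ _ HU HC ltac:(nra)) as [h1 h2].
    assert (s = s0) by nra. subst s.
    assert (c = c0) by nra. subst c. reflexivity.
Qed.

Lemma exposes_curves_alg_flip p :
  (exists a, exposes curves_alg a p) -> exists a, exposes curves_alg a (flip p).
Proof.
  intros [a Ha]. exists (flip a). apply exposes_flip; [apply curves_alg_flip | exact Ha].
Qed.

Lemma exposes_curves_alg p : curves_alg p -> exists a, exposes curves_alg a p.
Proof.
  assert (Htop : forall c s, c * c + s * s = 1 -> exists a, exposes curves_alg a (mkR3 c s 1)).
  { intros c s Hcs. destruct (Rlt_or_le c 1) as [h|h].
    - eexists. apply exposes_top_circle; assumption.
    - assert (c = 1) by nra. subst. assert (s = 0) by nra. subst.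
      eexists. apply exposes_top_corner. }
  intros [[c [s [Hcs ->]]] | [[c [s [Hcs ->]]] | [c [s [Hcs [Hs ->]]]]]].
  - apply Htop, Hcs.
  - replace (mkR3 c s (-1)) with (flip (mkR3 c (- s) 1)) by (unfold flip; simpl; f_equal; ring).
    apply exposes_curves_alg_flip, Htop. nra.
  - destruct (Rlt_or_le 0 s) as [h|h]; [eexists; apply exposes_gamma; assumption|].
    assert (s = 0) by lra. subst. assert (c = 1 \/ c = -1) as [-> | ->] by nra.
    + replace (gamma_cs 1 0) with (mkR3 1 0 1) by (unfold gamma_cs; f_equal; field).
      apply Htop. lra.
    + replace (gamma_cs (-1) 0) with (flip (mkR3 1 0 1))
        by (unfold flip, gamma_cs; simpl; f_equal; field).
      apply exposes_curves_alg_flip, Htop. lra.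
Qed.

Theorem proposition5p4 :
  (forall p, extreme_point (conv curves) p <-> curves p) /\
  (forall p, extreme_point (conv curves) p -> exposed_point (conv curves) p).
Proof.
  assert (Hexp : forall p, curves p -> exposed_point (conv curves) p).
  { intros p Hp. destruct (exposes_curves_alg p (curves_alg_of_curves p Hp)) as [a Ha].
    apply (exposed_conv curves p a Hp).
    apply (exposes_subset curves curves_alg); [apply curves_alg_of_curves | exact Ha]. }
  split; [intro p; split|].
  - apply extreme_conv_mem.
  - intro Hp. exact (proj1 (Hexp p Hp)).
  - intros p Hp. apply Hexp, extreme_conv_mem, Hp.
Qed.
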